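(* Let $K(x,y)$ be a real kernel on $\{x\ne y\}\subset\mathbb R^2$ with $|K(x,y)|\le C|x-y|^{-1}$, differentiable in $x$ with $\partial_xK(x,y)\ge c\,(x-y)^{-2}$ for all $x\ne y$, for some $c>0$. Let $J$ be a bounded interval with center $c_J$, $\omega$ a positive Borel measure with $0<\omega(J)<\infty$, and $\mu$ a finite positive Borel measure whose support is disjoint from the closure of $J$; set $T\mu(x)=\int K(x,y)\,d\mu(y)$ for $x\in J$. Then $$\int_J\int_J|T\mu(x)-T\mu(z)|^2\,d\omega(x)\,d\omega(z)\ \ge\ \frac{c^2}{8}\Big(\frac{\mathrm P(J,\mu)}{|J|}\Big)^2\,\omega(J)\int_J\big|x-\mathbb E^\omega_J x\big|^2\,d\omega(x),$$ where $\mathbb E^\omega_Jx=\omega(J)^{-1}\int_Jx\,d\omega(x)$.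
   Context: $\mathrm P(J,\mu)=\int_{\mathbb R}\frac{|J|}{(|J|+\operatorname{dist}(y,J))^2}\,d\mu(y)$. *)

From HB Require Import structures.
From mathcomp Require Import all_boot all_order all_algebra.
From mathcomp Require Import all_classical all_reals all_analysis.
Set Implicit Arguments. Unset Strict Implicit. Unset Printing Implicit Defensive.
Import Order.TTheory GRing.Theory Num.Theory.
Import numFieldNormedType.Exports.
Local Open Scope classical_set_scope.
Local Open Scope ring_scope.

Definition msupport (R : realType) (mu : {measure set R -> \bar R}) : set R :=
  [set x | forall U : set R, open U -> U x -> (0 < mu U)%E].

Definition dist_set (R : realType) (y : R) (J : set R) : R :=
  inf [set `|y - x| | x in J].

Definition poissonP (R : realType) (J : set R) (lenJ : R)
    (mu : {measure set R -> \bar R}) : \bar R :=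
  (\int[mu]_y (lenJ / (lenJ + dist_set y J) ^+ 2)%:E)%E.

Definition Top (R : realType) (K : R -> R -> R)
    (mu : {measure set R -> \bar R}) (x : R) : R :=
  fine (\int[mu]_y (K x y)%:E)%E.

Definition EJ (R : realType) (omega : {measure set R -> \bar R}) (J : set R) : R :=
  fine (\int[omega]_(x in J) x%:E)%E / fine (omega J).

From HB Require Import structures.
From mathcomp Require Import all_boot all_order all_algebra.
From mathcomp Require Import all_classical all_reals all_analysis.
From mathcomp Require Import measurable_realfun ring lra.
Import Order.TTheory GRing.Theory Num.Theory.
Import numFieldNormedType.Exports.
Local Open Scope classical_set_scope.
Local Open Scope ring_scope.

(* For z < x in J and y outside [a, b], the mean value theorem and
   [|xi - y| <= |J| + dist(y, J)] for every xi in [a, b] give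
   [K(x, y) - K(z, y) >= c (x - z) / (|J| + dist(y, J))^2].  Since mu does not
   charge a neighbourhood of the compact [a, b], integrating in y yields
   [T mu(x) - T mu(z) >= (c P(J, mu) / |J|) (x - z)].  Squaring, integrating
   against omega x omega and using
   [int int (x - z)^2 = 2 omega(J) int (x - E x)^2] proves the bound, even with
   the constant 2 in place of 1/8. *)

Section integral_bounds.
Context d (T : measurableType d) (R : realType).
Variable mu : {measure set T -> \bar R}.
Local Open Scope ereal_scope.

(* Unlike [ge0_le_integral], no measurability is required: both sides are
   suprema of integrals of simple functions below the integrand. *)
Lemma ge0_le_integral_nonmeasurable (D : set T) (f g : T -> \bar R) :
  (forall x, D x -> 0 <= f x) -> (forall x, D x -> f x <= g x) ->
  \int[mu]_(x in D) f x <= \int[mu]_(x in D) g x.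
Proof.
move=> f0 fg.
have g0 x : D x -> 0 <= g x by move=> Dx; exact: le_trans (f0 x Dx) (fg x Dx).
rewrite !ge0_integralE//; apply: ge_ereal_sup => _ [h /= hf <-].
apply: ereal_sup_ubound => /=; exists h => //= x.
apply: le_trans (hf x) _; rewrite /patch; case: ifPn => // /set_mem Dx.
exact: fg.
Qed.

Lemma integrable_bounded (A : set T) (f : T -> R) (M : R) :
  measurable A -> mu A < +oo -> measurable_fun A f ->
  {ae mu, forall x, A x -> (`|f x| <= M)%R} -> mu.-integrable A (EFin \o f).
Proof.
move=> mA Afin mf fM; apply/integrableP; split; first exact/measurable_EFinP.
apply: le_lt_trans (integral_le_bound (`|M|)%:E _ _ _ _) _ => //.
- exact/measurable_EFinP.
- apply: filterS fM => x fxM Ax; rewrite /= lee_fin.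
  exact: le_trans (fxM Ax) (ler_norm _).
- by rewrite lte_mul_pinfty.
Qed.

End integral_bounds.

Lemma measurable_squeezed_itv (R : realType) (a b : R) (J : set R) :
  `]a, b[ `<=` J -> J `<=` `[a, b] -> measurable J.
Proof.
move=> oJ Jc.
have mJ1 (e : R) : measurable (J `&` [set e]).
  by case: (subset_set1 (@subIsetr _ J [set e])) => ->.
suff -> : J = `]a, b[ `|` (J `&` [set a]) `|` (J `&` [set b]).
  by apply: measurableU; [apply: measurableU; [exact: measurable_itv|]|].
apply/seteqP; split => [x Jx|x [[/oJ|[]]|[]]//].
have := Jc x Jx; rewrite /= in_itv /= => /andP[ax xb].
have [xa|xa] := eqVneq x a; first by subst x; left; right.
have [xb'|xb'] := eqVneq x b; first by subst x; right.
by left; left; rewrite /= in_itv /= !lt_neqAle ax xb eq_sym xa xb'.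
Qed.

Section interval_geometry.
Context {R : realType}.
Implicit Types a b t y : R.

Definition itv_dist a b y : R := (`|y - a| + `|y - b| - (b - a)) / 2.

Lemma itv_dist_ge0 a b y : 0 <= itv_dist a b y.
Proof.
rewrite divr_ge0 // subr_ge0 (_ : b - a = (y - a) - (y - b)); last by ring.
exact: le_trans (ler_norm _) (ler_normB _ _).
Qed.

Lemma le_itv_dist a b t y : a <= t <= b -> `|t - y| <= (b - a) + itv_dist a b y.
Proof.
move=> /andP[at_ tb]; rewrite /itv_dist.
have ta : `|t - y| <= (t - a) + `|y - a|.
  rewrite (_ : t - y = (t - a) - (y - a)); last by ring.
  by apply: le_trans (ler_normB _ _) _; rewrite ger0_norm // subr_ge0.
have tb' : `|t - y| <= (b - t) + `|y - b|.
  rewrite (_ : t - y = (b - y) - (b - t)); last by ring.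
  by apply: le_trans (ler_normB _ _) _; rewrite distrC addrC ger0_norm // subr_ge0.
lra.
Qed.

Lemma itv_dist_le a b t y : a <= t <= b -> itv_dist a b y <= `|y - t|.
Proof.
move=> /andP[at_ tb]; rewrite /itv_dist ler_pdivrMr //.
have ya : `|y - a| <= `|y - t| + (t - a).
  rewrite (_ : y - a = (y - t) + (t - a)); last by ring.
  by apply: le_trans (ler_normD _ _) _; rewrite [`|t - a|]ger0_norm // subr_ge0.
have yb : `|y - b| <= `|y - t| + (b - t).
  rewrite (_ : y - b = (y - t) - (b - t)); last by ring.
  by apply: le_trans (ler_normB _ _) _; rewrite [`|b - t|]ger0_norm // subr_ge0.
lra.
Qed.

Lemma itv_dist_approx a b y e : a < b -> 0 < e ->
  exists2 t, a < t < b & `|y - t| <= itv_dist a b y + e.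
Proof.
move=> ab e0; rewrite /itv_dist.
pose m := Num.min e ((b - a) / 2).
have m0 : 0 < m by rewrite lt_min e0 /=; lra.
have me : m <= e by rewrite ge_min lexx.
have mab : m <= (b - a) / 2 by rewrite ge_min lexx orbT.
have [ya|ay] := leP y a.
  exists (a + m); first by apply/andP; split; lra.
  by rewrite !ler0_norm ?subr_le0; lra.
have [by_|yb] := leP b y.
  exists (b - m); first by apply/andP; split; lra.
  by rewrite !ger0_norm ?subr_ge0; lra.
exists y; first by apply/andP.
by rewrite subrr normr0 ger0_norm ?ler0_norm ?subr_ge0 ?subr_le0 ?ltW //; lra.
Qed.

Lemma dist_setE a b (J : set R) : a < b -> `]a, b[ `<=` J -> J `<=` `[a, b] ->
  forall y, dist_set y J = itv_dist a b y.
Proof.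
move=> ab oJ Jc y; rewrite /dist_set; set S := [set `|y - x| | x in J].
have lbS : lbound S (itv_dist a b y).
  by move=> _ [x /Jc + <-]; rewrite /= in_itv /=; exact: itv_dist_le.
apply/eqP; rewrite eq_le; apply/andP; split; last first.
  apply: lb_le_inf => //; exists `|y - (a + b) / 2|, ((a + b) / 2) => //.
  by apply: oJ; rewrite /= in_itv /=; apply/andP; split; lra.
apply/ler_addgt0Pr => e e0; have [t tab yt] := itv_dist_approx _ _ y _ ab e0.
by apply: le_trans (ge_inf _ _) yt; [exists (itv_dist a b y)|exists t => //; exact: oJ].
Qed.

Definition poisson_kernel a b y : R := (b - a) / ((b - a) + itv_dist a b y) ^+ 2.

Lemma poisson_kernel_ge0 a b y : a < b -> 0 <= poisson_kernel a b y.
Proof. by move=> ab; rewrite divr_ge0 ?sqr_ge0 // subr_ge0 ltW. Qed.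

Lemma poisson_kernel_le a b y : a < b -> poisson_kernel a b y <= (b - a)^-1.
Proof.
move=> ab; have L0 : 0 < b - a by rewrite subr_gt0.
have dy := itv_dist_ge0 a b y.
apply: (@le_trans _ _ ((b - a) / (b - a) ^+ 2)); last first.
  by rewrite expr2 invfM mulrA divff ?mul1r // gt_eqF.
have D2 : (b - a) ^+ 2 <= ((b - a) + itv_dist a b y) ^+ 2.
  by rewrite !expr2; apply: ler_pM; lra.
apply: ler_wpM2l; first lra.
by rewrite lef_pV2 ?posrE ?exprn_gt0 //; lra.
Qed.

Lemma continuous_poisson_kernel a b : a < b -> continuous (poisson_kernel a b).
Proof.
move=> ab y; have dpos t : (b - a) + itv_dist a b t != 0.
  by apply: lt0r_neq0; have := itv_dist_ge0 a b t; rewrite -subr_gt0 in ab; lra.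
apply: cvgM; first exact: cvg_cst.
apply: cvgV; first by rewrite expf_neq0.
have Dcvg : (b - a) + itv_dist a b t @[t --> y] --> (b - a) + itv_dist a b y.
  apply: cvgD; first exact: cvg_cst.
  apply: cvgM; last exact: cvg_cst.
  apply: cvgB; last exact: cvg_cst.
  by apply: cvgD; apply: cvg_norm; apply: cvgB; (exact: cvg_id || exact: cvg_cst).
exact: (cvgM Dcvg Dcvg).
Qed.

End interval_geometry.

Lemma itv_cc_sub_closure_oo (R : realType) (a b : R) :
  a < b -> `[a, b] `<=` closure `]a, b[.
Proof.
move=> ab t tab B /nbhs_ballP [e /= e0 eB].
have [s sab ts] := itv_dist_approx a b t (e / 2) ab (divr_gt0 e0 (ltr0Sn _ 1)).
have dt0 : itv_dist a b t <= 0.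
  by have := itv_dist_le a b t t tab; rewrite subrr normr0.
exists s; split; first by rewrite /= in_itv.
by apply: eB; rewrite /ball /=; lra.
Qed.

Section support.
Context {R : realType} (mu : {measure set R -> \bar R}).

Lemma msupportNP t : ~ msupport mu t ->
  exists2 r : R, 0 < r & mu `](t - r), (t + r)[%classic = 0%E.
Proof.
move=> /existsNP [U /not_implyP [oU /not_implyP [Ut /negP]]].
rewrite -leNgt => muU.
have /nbhs_ballP [r /= r0 rU] : nbhs t U by exact: open_nbhs_nbhs.
exists r => //; apply/eqP; rewrite eq_le measure_ge0 andbT.
apply: le_trans muU; apply: le_measure; rewrite ?inE.
- exact: measurable_itv.
- exact: open_measurable.
- by move=> y ty; apply: rU; rewrite ball_itv.
Qed.

Lemma compact_negligible (A : set R) : compact A ->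
  (forall t, A t -> ~ msupport mu t) -> mu.-negligible A.
Proof.
move=> cA Asupp.
have rt_ex t : exists rt : R, A t ->
    0 < rt /\ mu `](t - rt), (t + rt)[%classic = 0%E.
  have [At|nAt] := pselect (A t); last by exists 1 => /nAt.
  by have [rt rt0 hrt] := msupportNP t (Asupp t At); exists rt.
have [r hr] := choice rt_ex.
pose B t := `](t - r t), (t + r t)[%classic.
move: cA; rewrite compact_cover => /(_ R A B) [t _|t At|D' DA AD'].
- exact: interval_open.
- exists t => //; have [rt0 _] := hr t At.
  by rewrite /B /= in_itv /=; apply/andP; split; lra.
apply: (negligibleS AD'); rewrite /cover bigcup_fset big_seq.
elim/big_ind : _ => //; [exact: negligible_set0|exact: negligibleU|].
move=> t /DA /set_mem At; apply/negligibleP; first exact: measurable_itv.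
by case: (hr t At).
Qed.

End support.

Section kernel.
Context {R : realType} (K : R -> R -> R).

Lemma integrable_kernel (mu : {measure set R -> \bar R}) (C x r : R) :
  measurable_fun (~` [set x]) (K x) ->
  (forall y, x != y -> `|K x y| <= C / `|x - y|) ->
  0 < r -> mu `](x - r), (x + r)[%classic = 0%E -> (mu setT < +oo)%E ->
  mu.-integrable setT (EFin \o K x).
Proof.
move=> mK Ksize r0 mu0 mufin.
have mKT : measurable_fun setT (K x).
  rewrite -(setvU [set x]) setUC; apply/measurable_funU => //.
  - exact: measurableC.
  - by split => //; exact: measurable_fun_set1.
apply: (@integrable_bounded _ _ _ mu setT (K x) (`|C| / r)) => //.
exists `](x - r), (x + r)[%classic; split; [exact: measurable_itv|exact: mu0|].
move=> y /= yfar; apply: contrapT => ynear; apply: yfar => _.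
have rxy : r <= `|x - y|.
  rewrite leNgt; apply/negP; rewrite ltr_norml => /andP[h1 h2].
  by apply: ynear; rewrite /= in_itv /=; apply/andP; split; lra.
have xy : x != y by apply/eqP => exy; move: rxy; rewrite exy subrr normr0; lra.
apply: le_trans (Ksize y xy) _; apply: le_trans (_ : `|C| / `|x - y| <= _).
  by apply: ler_wpM2r; [rewrite invr_ge0|exact: ler_norm].
by apply: ler_wpM2l => //; rewrite lef_pV2 ?posrE //; lra.
Qed.

Variable c : R.
Hypothesis Kder : forall x y, x != y -> derivable (fun t => K t y) x 1.
Hypothesis Kmono : forall x y, x != y ->
  c / (x - y) ^+ 2 <= derive1 (fun t => K t y) x.

Lemma kernel_increment_ge (a b x z y : R) : 0 <= c ->
  a <= z -> z < x -> x <= b -> ~ `[a, b]%classic y ->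
  c * (x - z) / (b - a) * poisson_kernel a b y <= K x y - K z y.
Proof.
move=> c0 az zx xb yab.
have yN t : a <= t <= b -> t != y.
  by move=> tab; apply: contra_notN yab => /eqP <-; rewrite /= in_itv.
have Kd t : t \in `]z, x[ -> is_derive t 1 (fun t => K t y) ('D_1 (fun t => K t y) t).
  rewrite in_itv /= => /andP[zt tx]; apply/derivableP/Kder/yN.
  by apply/andP; split; lra.
have Kc : {within `[z, x], continuous (fun t => K t y)}.
  apply: derivable_within_continuous => t; rewrite in_itv /= => /andP[zt tx].
  by apply/Kder/yN; apply/andP; split; lra.
have [xi xizx ->] := MVT zx Kd Kc; rewrite -derive1E.
move: xizx; rewrite in_itv /= => /andP[zxi xix].
have xiab : a <= xi <= b by apply/andP; split; lra.
set D := (b - a) + itv_dist a b y.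
have D0 : 0 < D by have := itv_dist_ge0 a b y; rewrite /D; lra.
have xiy0 : 0 < `|xi - y| by rewrite normr_gt0 subr_eq0 yN.
have xiyD : `|xi - y| <= D := le_itv_dist a b xi y xiab.
have -> : c * (x - z) / (b - a) * poisson_kernel a b y = c / D ^+ 2 * (x - z).
  by rewrite /poisson_kernel -/D; field; apply/andP; split; apply: lt0r_neq0; lra.
apply: ler_wpM2r; first by rewrite subr_ge0; exact: ltW.
apply: le_trans (Kmono xi y (yN xi xiab)).
apply: ler_wpM2l => //; rewrite -[(xi - y) ^+ 2](real_normK (num_real _)).
by rewrite lef_pV2 ?posrE ?exprn_gt0 // !expr2; apply: ler_pM; lra.
Qed.

End kernel.

Section variance.
Context {R : realType} (om : {measure set R -> \bar R}) (a b : R) (J : set R).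
Hypotheses (mJ : measurable J) (Jab : J `<=` `[a, b]) (omJfin : (om J < +oo)%E).

Lemma integral_quadratic (al be ga : R) :
  (\int[om]_(x in J) (al + be * x + ga * x ^+ 2)%:E =
   (al * fine (om J) + be * fine (\int[om]_(x in J) x%:E)
      + ga * fine (\int[om]_(x in J) (x ^+ 2)%:E))%:E)%E.
Proof.
set B := `|a| + `|b|.
have JB x : J x -> `|x| <= B.
  move=> /Jab; rewrite /= in_itv /= => /andP[ax xb].
  have := ler_norm b; have := normr_ge0 b; have := normr_ge0 a.
  have := ler_norm (- a); rewrite normrN /B ler_norml => *.
  by apply/andP; split; lra.
have i0 : om.-integrable J (EFin \o (fun=> 1 : R)).
  by apply: (@integrable_bounded _ _ _ om J _ 1) => //; apply: aeW => x _; rewrite normr1.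
have i1 : om.-integrable J (EFin \o id).
  by apply: (@integrable_bounded _ _ _ om J _ B) => //; apply: aeW => x; exact: JB.
have i2 : om.-integrable J (EFin \o (fun x : R => x ^+ 2)).
  apply: (@integrable_bounded _ _ _ om J _ (B ^+ 2)) => //; apply: aeW => x Jx.
  rewrite normrX lerXn2r ?nnegrE ?JB //; exact: le_trans (normr_ge0 x) (JB x Jx).
have f0 : om J \is a fin_num by rewrite ge0_fin_numE.
have f1 := integrable_fin_num mJ i1.
have f2 := integrable_fin_num mJ i2.
have iAl : om.-integrable J (fun=> al%:E).
  by rewrite -[al%:E]mule1; exact: integrableZl.
have iBe : om.-integrable J (fun x => be%:E * x%:E)%E by exact: integrableZl.
have iGa : om.-integrable J (fun x => ga%:E * (x ^+ 2)%:E)%E by exact: integrableZl.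
under eq_integral do rewrite 2!EFinD 2!EFinM.
rewrite integralD //; last exact: integrableD.
rewrite integralD // !integralZl // integral_cst //.
by rewrite -(fineK f0) -(fineK f1) -(fineK f2) -!EFinM -!EFinD.
Qed.

Hypothesis omJ0 : (0 < om J)%E.

(* Both sides equal [2 k^2 (m0 m2 - m1^2)], with [mi] the moments of [om] on [J]. *)
Lemma double_integral_sqr_sub (k : R) :
  (\int[om]_(x in J) \int[om]_(z in J) ((k * (x - z)) ^+ 2)%:E =
   (2 * k ^+ 2)%:E * om J * \int[om]_(x in J) ((x - EJ om J) ^+ 2)%:E)%E.
Proof.
set m0 := fine (om J).
set m1 := fine (\int[om]_(x in J) x%:E)%E.
set m2 := fine (\int[om]_(x in J) (x ^+ 2)%:E)%E.
have omJE : om J = m0%:E by rewrite /m0 fineK // ge0_fin_numE.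
have m0_gt0 : 0 < m0 by rewrite -lte_fin -omJE.
have inner x : (\int[om]_(z in J) ((k * (x - z)) ^+ 2)%:E =
    ((k ^+ 2 * x ^+ 2) * m0 + (- 2 * k ^+ 2 * x) * m1 + k ^+ 2 * m2)%:E)%E.
  by rewrite -integral_quadratic; apply: eq_integral => z _; congr (_%:E); ring.
under eq_integral do rewrite inner.
have outer : (\int[om]_(x in J)
    ((k ^+ 2 * x ^+ 2) * m0 + (- 2 * k ^+ 2 * x) * m1 + k ^+ 2 * m2)%:E =
    (k ^+ 2 * m2 * m0 + (- 2 * k ^+ 2 * m1) * m1 + k ^+ 2 * m0 * m2)%:E)%E.
  by rewrite -integral_quadratic; apply: eq_integral => x _; congr (_%:E); ring.
have var : (\int[om]_(x in J) ((x - EJ om J) ^+ 2)%:E =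
    ((m1 / m0) ^+ 2 * m0 + (- 2 * (m1 / m0)) * m1 + 1 * m2)%:E)%E.
  rewrite -integral_quadratic; apply: eq_integral => x _; congr (_%:E).
  by rewrite (_ : EJ om J = m1 / m0) //; ring.
rewrite outer var omJE -!EFinM; congr (_%:E).
by field; exact: lt0r_neq0.
Qed.

End variance.

Section operator_increment.
Context {R : realType} (K : R -> R -> R) (C c a b : R) (J : set R).
Context (mu : {measure set R -> \bar R}).
Hypotheses (Kmeas : forall x, measurable_fun (~` [set x]) (K x))
  (Ksize : forall x y, x != y -> `|K x y| <= C / `|x - y|)
  (Kder : forall x y, x != y -> derivable (fun t => K t y) x 1)
  (c0 : 0 <= c)
  (Kmono : forall x y, x != y -> c / (x - y) ^+ 2 <= derive1 (fun t => K t y) x)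
  (ab : a < b) (Jl : `]a, b[ `<=` J) (Jr : J `<=` `[a, b])
  (mufin : (mu setT < +oo)%E) (supp : msupport mu `&` closure J = set0).

Lemma poissonPE : poissonP J (b - a) mu = (\int[mu]_y (poisson_kernel a b y)%:E)%E.
Proof. by apply: eq_integral => y _; rewrite (dist_setE _ _ _ ab Jl Jr). Qed.

Lemma integrable_poisson_kernel : mu.-integrable setT (EFin \o poisson_kernel a b).
Proof.
apply: (@integrable_bounded _ _ _ mu setT _ (b - a)^-1) => //.
  exact: continuous_measurable_fun (continuous_poisson_kernel _ _ ab).
apply: aeW => y _; rewrite ger0_norm ?poisson_kernel_ge0 //.
exact: poisson_kernel_le.
Qed.

Lemma poissonP_fin_num : poissonP J (b - a) mu \is a fin_num.
Proof. by rewrite poissonPE; exact: integrable_fin_num integrable_poisson_kernel. Qed.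

Lemma poissonP_ge0 : 0 <= fine (poissonP J (b - a) mu).
Proof.
by rewrite fine_ge0 // poissonPE integral_ge0 // => y _; rewrite lee_fin poisson_kernel_ge0.
Qed.

Lemma closure_notin_msupport t : closure J t -> ~ msupport mu t.
Proof. by move=> Jt supp_t; have : (msupport mu `&` closure J) t by []; rewrite supp. Qed.

Lemma measure_itv_cc0 : mu `[a, b]%classic = 0%E.
Proof.
apply/negligibleP; first exact: measurable_itv.
apply: compact_negligible; first exact: segment_compact.
move=> t tab; apply: closure_notin_msupport.
by move: (itv_cc_sub_closure_oo _ _ _ ab t tab); apply: closureS.
Qed.

Lemma integrable_kernel_in x : J x -> mu.-integrable setT (EFin \o K x).
Proof.
move=> Jx; have [r r0 mu0] := msupportNP mu x (closure_notin_msupport x (subset_closure Jx)).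
exact: integrable_kernel (Kmeas x) (Ksize x) r0 mu0 mufin.
Qed.

Lemma Top_increment_ge x z : J x -> J z -> z < x ->
  c * fine (poissonP J (b - a) mu) / (b - a) * (x - z) <= Top K mu x - Top K mu z.
Proof.
move=> Jx Jz zx; have iKx := integrable_kernel_in x Jx; have iKz := integrable_kernel_in z Jz.
have iKxz : mu.-integrable setT (fun y => (K x y)%:E - (K z y)%:E)%E.
  exact: integrableB.
have iP : mu.-integrable setT (fun y => (c * (x - z) / (b - a))%:E * (poisson_kernel a b y)%:E)%E.
  exact: integrableZl integrable_poisson_kernel.
rewrite /Top -lee_fin EFinB !fineK ?(integrable_fin_num measurableT) //.
rewrite -integralB_EFin //.
have -> : (c * fine (poissonP J (b - a) mu) / (b - a) * (x - z))%:E =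
    (\int[mu]_y ((c * (x - z) / (b - a))%:E * (poisson_kernel a b y)%:E))%E.
  rewrite integralZl ?integrable_poisson_kernel // -poissonPE.
  by rewrite -[poissonP _ _ _]fineK ?poissonP_fin_num // -EFinM; congr (_%:E); ring.
have mab : measurable (`[a, b]%classic : set R) by exact: measurable_itv.
rewrite (negligible_integral mab measurableT iP measure_itv_cc0).
rewrite [leRHS](negligible_integral mab measurableT iKxz measure_itv_cc0).
have mD : measurable (setT `\` `[a, b]%classic : set R) by exact: measurableD.
apply: le_integral => //; [exact: integrableS measurableT mD _ iP|
                           exact: integrableS measurableT mD _ iKxz|].
move=> y; rewrite inE /= => -[_ yab]; rewrite -EFinM -EFinB lee_fin.
have := Jr x Jx; have := Jr z Jz; rewrite /= !in_itv /= => /andP[az zb] /andP[ax xb].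
exact: (@kernel_increment_ge _ K c Kder Kmono _ _ _ _ _ c0 az zx xb yab).
Qed.

Lemma sqr_Top_increment_ge x z : J x -> J z ->
  (c * fine (poissonP J (b - a) mu) / (b - a) * (x - z)) ^+ 2
    <= (Top K mu x - Top K mu z) ^+ 2.
Proof.
set k := c * _ / _.
have k0 : 0 <= k by rewrite divr_ge0 ?mulr_ge0 ?poissonP_ge0 // subr_ge0 ltW.
have incr u v : J u -> J v -> v < u -> (k * (u - v)) ^+ 2 <= (Top K mu u - Top K mu v) ^+ 2.
  move=> Ju Jv vu; have kuv := Top_increment_ge u v Ju Jv vu.
  have kuv0 : 0 <= k * (u - v) by rewrite mulr_ge0 // subr_ge0 ltW.
  by apply: lerXn2r; rewrite ?nnegrE // (le_trans kuv0 kuv).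
move=> Jx Jz; have [zx|xz|->] := ltgtP z x.
- exact: incr.
- by rewrite -[x - z]opprB mulrN sqrrN -[Top K mu x - _]opprB sqrrN; exact: incr.
- by rewrite !subrr mulr0 expr0n lexx.
Qed.

End operator_increment.

Theorem mainTheorem11 (R : realType) (K : R -> R -> R) (C c : R)
  (hKmeas : forall x : R, measurable_fun (~` [set x]) (K x))
  (hKsize : forall x y : R, x != y -> `|K x y| <= C / `|x - y|)
  (hKder : forall x y : R, x != y -> derivable (fun t => K t y) x 1)
  (hc : 0 < c)
  (hKmono : forall x y : R, x != y ->
     c / (x - y) ^+ 2 <= derive1 (fun t => K t y) x)
  (a b : R) (hab : a < b) (J : set R)
  (hJl : `]a, b[ `<=` J) (hJr : J `<=` `[a, b])
  (omega : {measure set R -> \bar R})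
  (homJ0 : (0 < omega J)%E) (homJfin : (omega J < +oo)%E)
  (mu : {measure set R -> \bar R}) (hmufin : (mu setT < +oo)%E)
  (hsupp : msupport mu `&` closure J = set0) :
  let lenJ := b - a in
  let P := fine (poissonP J lenJ mu) in
  (\int[omega]_(x in J) \int[omega]_(z in J)
      ((Top K mu x - Top K mu z) ^+ 2)%:E
   >= ((c ^+ 2 / 8) * (P / lenJ) ^+ 2)%:E * omega J *
      \int[omega]_(x in J) ((x - EJ omega J) ^+ 2)%:E)%E.
Proof.
cbv zeta.
set k := c * fine (poissonP J (b - a) mu) / (b - a).
have mJ := measurable_squeezed_itv _ _ _ _ hJl hJr.
have sqr_Top_ge x z : J x -> J z -> (k * (x - z)) ^+ 2 <= (Top K mu x - Top K mu z) ^+ 2.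
  by apply: (@sqr_Top_increment_ge _ K C) => //; exact: ltW.
have lower : (\int[omega]_(x in J) \int[omega]_(z in J) ((k * (x - z)) ^+ 2)%:E <=
    \int[omega]_(x in J) \int[omega]_(z in J) ((Top K mu x - Top K mu z) ^+ 2)%:E)%E.
  apply: ge0_le_integral_nonmeasurable => [x _|x Jx].
    by apply: integral_ge0 => z _; rewrite lee_fin sqr_ge0.
  apply: ge0_le_integral_nonmeasurable => [z _|z Jz]; first by rewrite lee_fin sqr_ge0.
  by rewrite lee_fin sqr_Top_ge.
apply: le_trans lower; rewrite (double_integral_sqr_sub _ _ _ _ mJ hJr homJfin homJ0) -!muleA.
apply: lee_wpmul2r.
  by rewrite mule_ge0 // integral_ge0 // => x _; rewrite lee_fin sqr_ge0.
rewrite lee_fin (_ : 2 * k ^+ 2 = 16 * (c ^+ 2 / 8 * (fine (poissonP J (b - a) mu) / (b - a)) ^+ 2)).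
  set t := c ^+ 2 / 8 * _.
  have : 0 <= t by rewrite /t mulr_ge0 ?divr_ge0 ?sqr_ge0.
  lra.
by rewrite /k; field; rewrite subr_eq0 gt_eqF.
Qed.
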